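(* Suppose the rewards are $R_{\mathcal{T}}(s)=\langle f(\mathcal{T}),W_Rs\rangle$ for a function $f:\mathcal{C}^n\to\mathbb{R}^d$ which, for each $i\in\{1,\dots,n\}$, is $L_i$-Lipschitz in the capability $\mathcal{T}_i$ of agent $i$ (other capabilities fixed) with respect to $|\cdot|_\infty$ on both domain and codomain, while the transition dynamics do not depend on the capabilities. Let $s_{max}=\max_{s\in S}\|W_Rs\|_1$. Then for any two team compositions $\mathcal{T}^x,\mathcal{T}^y\in\mathcal{C}^n$, $$|V^*_{\mathcal{T}^x}-V^*_{\mathcal{T}^y}|\le\frac{s_{max}\sum_{i=1}^nL_i|\mathcal{T}^x_i-\mathcal{T}^y_i|_\infty}{\gamma(1-\gamma)}.$$
   Context: Setting. $S\subset[0,1]^k$ is a finite set of states (each state identified with its feature vector), $U$ is a finite individual action set, there are $n$ agents with joint action set $U^n$, $\rho$ is an initial state distribution on $S$ and $\gamma\in(0,1)$ is the discount factor. Capability vectors lie in $\mathcal{C}\subseteq\Delta_{d-1}$, the probability simplex in $\mathbb{R}^d$; a team composition is $\mathcal{T}=(\mathcal{T}_1,\dots,\mathcal{T}_n)\in\mathcal{C}^n$. $W_R\in\mathbb{R}^{d\times k}$ is a fixed matrix and $P(s'|s,\mathbf{u})$ is a fixed transition kernel common to all team compositions. Team composition $\mathcal{T}$ defines the MMDP with reward $R_{\mathcal{T}}$ and transitions $P$; $V^*_{\mathcal{T}}(s)$ is its optimal expected discounted return from $s$ and $V^*_{\mathcal{T}}=\mathbb{E}_{s_0\sim\rho}V^*_{\mathcal{T}}(s_0)$.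 $|\cdot|_\infty$, $\|\cdot\|_1$ are the sup and $\ell_1$ norms. *)

From HB Require Import structures.
From mathcomp Require Import all_boot all_order all_algebra.
From mathcomp Require Import all_classical all_reals all_analysis.
Set Implicit Arguments. Unset Strict Implicit. Unset Printing Implicit Defensive.
Import Order.TTheory GRing.Theory Num.Theory.
Import numFieldNormedType.Exports.
Local Open Scope ring_scope.
Local Open Scope classical_set_scope.

Section MMDP.
Variable R : realType.

Definition supn (d : nat) (v : 'rV[R]_d) : R := \big[Num.max/0]_(j < d) `|v 0 j|.
Definition l1n (d : nat) (v : 'cV[R]_d) : R := \sum_(j < d) `|v j 0|.

Definition simplex (d : nat) : set 'rV[R]_d :=
  [set c | (forall j, 0 <= c 0 j) /\ \sum_(j < d) c 0 j = 1].

Definition upd (n d : nat) (T : 'I_n -> 'rV[R]_d) (i : 'I_n) (c : 'rV[R]_d)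
  : 'I_n -> 'rV[R]_d := fun j => if j == i then c else T j.

Definition reward (n d k : nat) (S : finType) (phi : S -> 'cV[R]_k)
  (W : 'M[R]_(d, k)) (f : ('I_n -> 'rV[R]_d) -> 'rV[R]_d)
  (T : 'I_n -> 'rV[R]_d) (s : S) : R :=
  \sum_(j < d) f T 0 j * (W *m phi s) j 0.

Section Values.
Variables (n : nat) (S U : finType).
Variable P : S -> {ffun 'I_n -> U} -> S -> R.

(* a stationary (randomized, centralized) joint policy: pi s u = prob. of joint action u in s *)
Definition is_policy (pi : S -> {ffun 'I_n -> U} -> R) : Prop :=
  forall s, (forall u, 0 <= pi s u) /\ \sum_u pi s u = 1.

Fixpoint ptrans (pi : S -> {ffun 'I_n -> U} -> R) (t : nat) (s s' : S) : R :=
  match t with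
  | 0 => (s == s')%:R
  | t'.+1 => \sum_(s'' : S) ptrans pi t' s s'' *
               \sum_(u : {ffun 'I_n -> U}) pi s'' u * P s'' u s'
  end.

Definition Vpi (gamma : R) (r : S -> R) (pi : S -> {ffun 'I_n -> U} -> R) (s : S) : R :=
  limn (series (fun t => gamma ^+ t * \sum_(s' : S) ptrans pi t s s' * r s')).

Definition Vstar_s (gamma : R) (r : S -> R) (s : S) : R :=
  sup [set Vpi gamma r pi s | pi in is_policy].

Definition Vstar (rho : S -> R) (gamma : R) (r : S -> R) : R :=
  \sum_(s : S) rho s * Vstar_s gamma r s.
End Values.
End MMDP.

(* The reward gap is bounded uniformly in the state: telescoping f along the
   hybrid teams that switch the agents one at a time from T^y to T^x gives
   |f T^x - f T^y|_oo <= sum_i L_i |T^x_i - T^y_i|_oo, and Hoelder's inequality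
   multiplies this by ||W_R s||_1 <= s_max.  Since the dynamics are shared, the
   discounted return of a fixed policy is linear in the reward and
   1/(1 - gamma)-Lipschitz for the sup norm; taking the supremum over policies
   and averaging over rho preserve such a uniform bound.  This yields the bound
   with 1/(1 - gamma), and the stated one is weaker because 0 < gamma < 1. *)
From HB Require Import structures.
From mathcomp Require Import all_boot all_order all_algebra.
From mathcomp Require Import all_classical all_reals all_analysis.
From mathcomp Require Import lra.
Import Order.TTheory GRing.Theory Num.Theory.
Import numFieldNormedType.Exports.
Set Implicit Arguments. Unset Strict Implicit.
Local Open Scope ring_scope.
Local Open Scope classical_set_scope.

Section SupNorm.
Variables (R : realType) (d : nat).
Implicit Types u v : 'rV[R]_d.

Lemma supn_ge0 v : 0 <= supn v.
Proof. by rewrite /supn; elim/big_ind: _ => // x y x0 y0; rewrite le_max x0. Qed.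

Lemma normr_le_supn v j : `|v 0 j| <= supn v.
Proof. exact: le_bigmax. Qed.

Lemma supn_le v B : 0 <= B -> (forall j, `|v 0 j| <= B) -> supn v <= B.
Proof. by move=> B0 vB; apply: bigmax_le. Qed.

Lemma supn0 : supn (0 : 'rV[R]_d) = 0.
Proof.
apply/eqP; rewrite eq_le supn_ge0 andbT.
by apply: supn_le => // j; rewrite mxE normr0.
Qed.

Lemma ler_supnD u v : supn (u + v) <= supn u + supn v.
Proof.
apply: supn_le => [|j]; first by rewrite addr_ge0 ?supn_ge0.
by rewrite mxE (le_trans (ler_normD _ _)) // lerD ?normr_le_supn.
Qed.

End SupNorm.

Section Telescoping.
Variables (R : realType) (d n : nat) (C : set 'rV[R]_d).
Variables (f : ('I_n -> 'rV[R]_d) -> 'rV[R]_d) (L : 'I_n -> R).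
Hypothesis f_lip : forall (T : 'I_n -> 'rV[R]_d) (i : 'I_n) (c c' : 'rV[R]_d),
  (forall j, C (T j)) -> C c -> C c' ->
  supn (f (upd T i c) - f (upd T i c')) <= L i * supn (c - c').
Variables Tx Ty : 'I_n -> 'rV[R]_d.
Hypotheses (HTx : forall i, C (Tx i)) (HTy : forall i, C (Ty i)).

Definition hybrid (m : nat) : 'I_n -> 'rV[R]_d :=
  fun j => if (j < m)%N then Ty j else Tx j.

Lemma hybrid_in_C m j : C (hybrid m j).
Proof. by rewrite /hybrid; case: ifP. Qed.

Lemma hybrid0 : hybrid 0 = Tx.
Proof. by []. Qed.

Lemma hybrid_n : hybrid n = Ty.
Proof. by apply/funext => j; rewrite /hybrid ltn_ord. Qed.

Lemma hybrid_updx (i : 'I_n) : hybrid i = upd (hybrid i) i (Tx i).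
Proof. by apply/funext => j; rewrite /upd; case: eqP => // ->; rewrite /hybrid ltnn. Qed.

Lemma hybrid_updy (i : 'I_n) : hybrid i.+1 = upd (hybrid i) i (Ty i).
Proof.
apply/funext => j; rewrite /hybrid /upd ltnS leq_eqVlt.
have [-> | ne] := eqVneq j i; first by rewrite !eqxx.
by move: ne; rewrite -(inj_eq val_inj) => /negbTE ->.
Qed.

Lemma supn_sub_hybrid m : (m <= n)%N ->
  supn (f Tx - f (hybrid m)) <= \sum_(i < n | (i < m)%N) L i * supn (Tx i - Ty i).
Proof.
elim: m => [_ | m IH lt_mn]; first by rewrite hybrid0 subrr supn0 big_pred0.
pose i := Ordinal lt_mn.
have -> : f Tx - f (hybrid m.+1) = (f Tx - f (hybrid m)) + (f (hybrid m) - f (hybrid m.+1)).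
  by rewrite addrA subrK.
rewrite (le_trans (ler_supnD _ _)) // (bigD1 i) //= addrC lerD //.
  rewrite (le_trans (IH (ltnW lt_mn))) // le_eqVlt (eq_bigl (fun j : 'I_n => (j < m)%N)) ?eqxx //.
  by move=> j; rewrite -(inj_eq val_inj) ltnS /=; case: ltngtP.
by rewrite [hybrid m](hybrid_updx i) (hybrid_updy i) f_lip // => j; apply: hybrid_in_C.
Qed.

Lemma supn_sub_le_sum_lipschitz :
  supn (f Tx - f Ty) <= \sum_(i < n) L i * supn (Tx i - Ty i).
Proof.
rewrite -{1}hybrid_n (le_trans (supn_sub_hybrid (leqnn n))) //.
by under eq_bigl do rewrite ltn_ord.
Qed.

End Telescoping.

Section Estimates.
Variable R : realType.

Lemma series_geometric_bound (a : R ^nat) (M g : R) : 0 <= M -> 0 <= g -> g < 1 ->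
  (forall t, `|a t| <= M * g ^+ t) ->
  cvgn (series a) /\ `|limn (series a)| <= M / (1 - g).
Proof.
move=> M0 g0 g1 a_le.
have g_lt1 : `|g| < 1 by rewrite ger0_norm.
have normed_cvg_a : cvgn [normed series a].
  apply: (series_le_cvg (v_ := geometric M g)) => // [t | t |].
  - by rewrite normr_ge0.
  - by rewrite /geometric mulr_ge0 // exprn_ge0.
  - exact: is_cvg_geometric_series.
split; first exact: normed_cvg.
rewrite (le_trans (lim_series_norm normed_cvg_a)) //.
rewrite -(cvg_lim _ (cvg_geometric_series (a := M) g_lt1)) //.
by apply: lim_series_le => //; apply: is_cvg_geometric_series.
Qed.

Lemma norm_convex_comb_le (I : finType) (p x : I -> R) E :
  (forall i, 0 <= p i) -> \sum_i p i = 1 -> (forall i, `|x i| <= E) ->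
  `|\sum_i p i * x i| <= E.
Proof.
move=> p0 p1 xE; rewrite (le_trans (ler_norm_sum _ _ _)) //.
rewrite -[E]mul1r -p1 mulr_suml ler_sum // => i _.
by rewrite normrM ger0_norm // ler_wpM2l.
Qed.

Lemma normr_le_sum_normr (I : finType) (x : I -> R) i : `|x i| <= \sum_j `|x j|.
Proof. by rewrite (bigD1 i) //= lerDl sumr_ge0. Qed.

Lemma dist_sup_le (I : Type) (D : set I) (a b : I -> R) (e : R) :
  0 <= e -> has_ubound (b @` D) -> (forall i, D i -> a i <= b i + e) ->
  sup (a @` D) <= sup (b @` D) + e.
Proof.
move=> e0 b_ub ab.
have [[i Di] | D0] := pselect (exists i, D i); last first.
  have -> : a @` D = set0 by apply/seteqP; split => // x [i Di]; case: D0; exists i.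
  have -> : b @` D = set0 by apply/seteqP; split => // x [i Di]; case: D0; exists i.
  by rewrite sup0 add0r.
apply: ge_sup => [|_ [j Dj <-]]; first by exists (a i), i.
by rewrite (le_trans (ab j Dj)) // lerD2r; apply: ub_le_sup => //; exists j.
Qed.

Lemma dist_reward_le (n d k : nat) (S : finType) (phi : S -> 'cV[R]_k)
    (W : 'M[R]_(d, k)) (f : ('I_n -> 'rV[R]_d) -> 'rV[R]_d) T T' s :
  `|reward phi W f T s - reward phi W f T' s|
    <= l1n (W *m phi s) * supn (f T - f T').
Proof.
rewrite /reward /l1n -sumrB mulr_suml (le_trans (ler_norm_sum _ _ _)) //.
apply: ler_sum => j _; rewrite -mulrBl normrM mulrC ler_wpM2l //.
by have := normr_le_supn (f T - f T') j; rewrite !mxE.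
Qed.

End Estimates.

Section Returns.
Variables (R : realType) (n : nat) (S U : finType).
Variable P : S -> {ffun 'I_n -> U} -> S -> R.
Hypotheses (P_ge0 : forall s u s', 0 <= P s u s')
           (P_sum1 : forall s u, \sum_(s' : S) P s u s' = 1).
Variable gamma : R.
Hypotheses (gamma_ge0 : 0 <= gamma) (gamma_lt1 : gamma < 1).

Lemma ptrans_ge0 pi t s s' : is_policy pi -> 0 <= ptrans P pi t s s'.
Proof.
move=> pi_pol; elim: t s' => [|t IH] s' /=; first by rewrite ler0n.
apply: sumr_ge0 => s'' _; rewrite mulr_ge0 // sumr_ge0 // => u _.
by rewrite mulr_ge0 //; case: (pi_pol s'').
Qed.

Lemma ptrans_sum1 pi t s : is_policy pi -> \sum_s' ptrans P pi t s s' = 1.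
Proof.
move=> pi_pol; elim: t => [|t IH] /=.
  by rewrite (bigD1 s) //= eqxx big1 ?addr0 // => s' /negPf; rewrite eq_sym => ->.
rewrite exchange_big -[RHS]IH; apply: eq_bigr => s'' _.
rewrite -mulr_sumr exchange_big /=.
under eq_bigr do rewrite -mulr_sumr P_sum1 mulr1.
by rewrite (proj2 (pi_pol s'')) mulr1.
Qed.

Let discounted pi s (r : S -> R) : R ^nat :=
  fun t => gamma ^+ t * \sum_s' ptrans P pi t s s' * r s'.

Lemma Vpi_bound pi s (r : S -> R) B : is_policy pi -> 0 <= B ->
  (forall s', `|r s'| <= B) ->
  cvgn (series (discounted pi s r)) /\ `|Vpi P gamma r pi s| <= B / (1 - gamma).
Proof.
move=> pi_pol B0 rB; apply: series_geometric_bound => // t.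
rewrite /discounted normrM ger0_norm ?exprn_ge0 // mulrC ler_wpM2r ?exprn_ge0 //.
by apply: norm_convex_comb_le rB => [s'|]; [exact: ptrans_ge0 | exact: ptrans_sum1].
Qed.

Lemma VpiB pi s (r r' : S -> R) : is_policy pi ->
  Vpi P gamma (fun s' => r s' - r' s') pi s = Vpi P gamma r pi s - Vpi P gamma r' pi s.
Proof.
move=> pi_pol.
have cvg_disc q : cvgn (series (discounted pi s q)).
  have sum_ge0 : 0 <= \sum_s' `|q s'| by rewrite sumr_ge0.
  by case: (Vpi_bound s pi_pol sum_ge0 (normr_le_sum_normr q)).
rewrite /Vpi -/(discounted pi s r) -/(discounted pi s r') -lim_seriesB ?cvg_disc //.
congr (limn (series _)).
apply/funext => t; rewrite !fctE /discounted -mulrBr -sumrB.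
by congr (_ * _); apply: eq_bigr => s' _; rewrite mulrBr.
Qed.

Lemma dist_Vpi_le pi s (r r' : S -> R) E : is_policy pi -> 0 <= E ->
  (forall s', `|r s' - r' s'| <= E) ->
  `|Vpi P gamma r pi s - Vpi P gamma r' pi s| <= E / (1 - gamma).
Proof. by move=> pi_pol E0 rE; rewrite -VpiB //; case: (Vpi_bound s pi_pol E0 rE). Qed.

Lemma Vpi_has_ubound s (r : S -> R) :
  has_ubound [set Vpi P gamma r pi s | pi in is_policy (n := n) (U := U)].
Proof.
exists ((\sum_s' `|r s'|) / (1 - gamma)) => _ [pi pi_pol <-].
rewrite (le_trans (ler_norm _)) //.
by case: (Vpi_bound s pi_pol _ (normr_le_sum_normr r)); rewrite ?sumr_ge0.
Qed.

Lemma dist_Vstar_s_le s (r r' : S -> R) E : 0 <= E ->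
  (forall s', `|r s' - r' s'| <= E) ->
  `|Vstar_s P gamma r s - Vstar_s P gamma r' s| <= E / (1 - gamma).
Proof.
move=> E0 rE; have e0 : 0 <= E / (1 - gamma) by rewrite divr_ge0 // subr_ge0 ltW.
have close pi : is_policy pi -> Vpi P gamma r pi s <= Vpi P gamma r' pi s + E / (1 - gamma)
              /\ Vpi P gamma r' pi s <= Vpi P gamma r pi s + E / (1 - gamma).
  move=> pi_pol; have := dist_Vpi_le s pi_pol E0 rE.
  by rewrite ler_norml => /andP[]; split; lra.
have le_rr' := dist_sup_le e0 (Vpi_has_ubound s r') (fun pi pol => proj1 (close pi pol)).
have le_r'r := dist_sup_le e0 (Vpi_has_ubound s r) (fun pi pol => proj2 (close pi pol)).
by rewrite /Vstar_s ler_norml; apply/andP; split; lra.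
Qed.

Lemma dist_Vstar_le (rho : S -> R) (r r' : S -> R) E :
  (forall s, 0 <= rho s) -> \sum_s rho s = 1 -> 0 <= E ->
  (forall s, `|r s - r' s| <= E) ->
  `|Vstar P rho gamma r - Vstar P rho gamma r'| <= E / (1 - gamma).
Proof.
move=> rho0 rho1 E0 rE; rewrite /Vstar -sumrB.
under eq_bigr do rewrite -mulrBr.
by apply: norm_convex_comb_le => // s; apply: dist_Vstar_s_le.
Qed.

End Returns.

Theorem theorem6 (R : realType) (k d n : nat) (S U : finType)
  (phi : S -> 'cV[R]_k)
  (phi_inj : injective phi)
  (phi_unit : forall s j, 0 <= phi s j 0 <= 1)
  (P : S -> {ffun 'I_n -> U} -> S -> R)
  (P_ge0 : forall s u s', 0 <= P s u s')
  (P_sum1 : forall s u, \sum_(s' : S) P s u s' = 1)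
  (rho : S -> R) (rho_ge0 : forall s, 0 <= rho s) (rho_sum1 : \sum_(s : S) rho s = 1)
  (gamma : R) (gamma_gt0 : 0 < gamma) (gamma_lt1 : gamma < 1)
  (C : set 'rV[R]_d) (C_simplex : C `<=` @simplex R d)
  (W : 'M[R]_(d, k))
  (f : ('I_n -> 'rV[R]_d) -> 'rV[R]_d) (L : 'I_n -> R)
  (f_lip : forall (T : 'I_n -> 'rV[R]_d) (i : 'I_n) (c c' : 'rV[R]_d),
     (forall j, C (T j)) -> C c -> C c' ->
     supn (f (upd T i c) - f (upd T i c')) <= L i * supn (c - c'))
  (Tx Ty : 'I_n -> 'rV[R]_d) (HTx : forall i, C (Tx i)) (HTy : forall i, C (Ty i)) :
  let smax := \big[Num.max/0]_(s : S) l1n (W *m phi s) in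
  `| Vstar P rho gamma (reward phi W f Tx) - Vstar P rho gamma (reward phi W f Ty) |
    <= smax * (\sum_(i < n) L i * supn (Tx i - Ty i)) / (gamma * (1 - gamma)).
Proof.
cbv zeta; set smax := \big[Num.max/0]_(s : S) l1n (W *m phi s).
set K := \sum_(i < n) L i * supn (Tx i - Ty i).
have f_dist : supn (f Tx - f Ty) <= K := supn_sub_le_sum_lipschitz f_lip HTx HTy.
have K0 : 0 <= K := le_trans (supn_ge0 _) f_dist.
have smax0 : 0 <= smax by apply: bigmax_ge_id.
have reward_dist s : `|reward phi W f Tx s - reward phi W f Ty s| <= smax * K.
  rewrite (le_trans (dist_reward_le _ _ _ _ _ _)) // ler_pM ?supn_ge0 //.
    by rewrite sumr_ge0.
  exact: (le_bigmax 0 (fun s => l1n (W *m phi s))).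
have Vstar_dist := dist_Vstar_le P_ge0 P_sum1 (ltW gamma_gt0) gamma_lt1
  rho_ge0 rho_sum1 (mulr_ge0 smax0 K0) reward_dist.
rewrite (le_trans Vstar_dist) // invfM [gamma^-1 * _]mulrC mulrA.
apply: ler_peMr; first by rewrite divr_ge0 ?mulr_ge0 // subr_ge0 ltW.
by rewrite invf_ge1 // ltW.
Qed.
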